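(* Let $k\ge 3$, constants $c_1\ge\dots\ge c_k>0$ with $\sum c_i=1$, and for $n$ with all $c_in$ integers let $G_n$ be the complete $k$-partite graph with parts $V_1,\dots,V_k$, $|V_i|=c_in$. Let $w_0$ be a uniformly random initial weighting. If $c_i>\tfrac12$, then $$\mathbb{E}(m_i)\le 2c_in-n+\frac{2(1-c_i)}{2c_i-1}.$$
   Context: An initial weighting of a graph on vertex set $V$, $|V|=n$, is a bijection $w_0:V\to\{-n,\dots,-1\}$; here $w_0$ is uniform among all $n!$ such bijections. The quantity $m_i$ is defined by $$m_i=\max\Big\{x\ge 0:\ \exists\, y\ge 0 \text{ with } 2y+x\le n \text{ and } \Big|\bigcup_{j=1}^{2y+x}w_0^{-1}(-j)\cap V_i\Big|=y+x\Big\},$$ equivalently $m_i=\max_{0\le t\le n}X(t)$ where $X(t)=|\{v\in V_i: w_0(v)\ge -t\}|-|\{v\in V\setminus V_i: w_0(v)\ge -t\}|$. A complete $k$-partite graph with parts $V_1,\dots,V_k$ has an edge between $u$ and $v$ iff they lie in different parts. *)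

From HB Require Import structures.
From mathcomp Require Import all_boot all_order all_algebra all_fingroup.
Set Implicit Arguments. Unset Strict Implicit. Unset Printing Implicit Defensive.
Import Order.TTheory GRing.Theory Num.Theory.
Local Open Scope ring_scope.

(* Vertex set V = 'I_n; the k parts are given by part : 'I_n -> 'I_k,
   V_j = [set v | part v == j]. *)

(* The complete k-partite graph with parts V_1..V_k (edge iff different parts).
   Recorded for documentation; m_i only depends on V_i and w_0. *)
Definition complete_multipartite n k (part : 'I_n -> 'I_k) : rel 'I_n :=
  fun u v => part u != part v.

(* Initial weighting encoded by a permutation s of 'I_n:
   w_0(v) = -(s v + 1), a bijection V -> {-n,...,-1}.  Every such bijection
   arises from exactly one s, so uniform w_0 = uniform s. *)
Definition weight n (s : {perm 'I_n}) (v : 'I_n) : int := - ((s v).+1)%:Z.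

Definition Xt n k (part : 'I_n -> 'I_k) (i : 'I_k) (s : {perm 'I_n}) (t : nat)
  : int :=
  (#|[set v | (part v == i) && (- (t%:Z) <= weight s v)]|%:Z
   - #|[set v | (part v != i) && (- (t%:Z) <= weight s v)]|%:Z).

(* m_i = max_{0 <= t <= n} X(t)  (X(0) = 0, so the bottom 0 is harmless,
   matching the requirement x >= 0 in the first definition). *)
Definition m_i n k (part : 'I_n -> 'I_k) (i : 'I_k) (s : {perm 'I_n}) : int :=
  \big[Num.max/0]_(t < n.+1) Xt part i s t.

Definition E_m (R : realFieldType) n k (part : 'I_n -> 'I_k) (i : 'I_k) : R :=
  (\sum_(s : {perm 'I_n}) (m_i part i s)%:~R) / (n`!)%:R.

From HB Require Import structures.
From mathcomp Require Import all_boot all_order all_algebra all_fingroup.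
From mathcomp Require Import zify ring lra.
Set Implicit Arguments. Unset Strict Implicit. Unset Printing Implicit Defensive.
Import Order.TTheory GRing.Theory Num.Theory.

(* List the vertices by decreasing weight and record whether each lies in
   [V_i]: for uniform [w_0] this is a uniformly random arrangement of
   [a = |V_i|] up-steps and [n - a] down-steps, and [X] is the corresponding
   +-1 walk.  Its maximum [m_i] is its final value [2a - n] plus the final
   distance below the running maximum, and by the reflection principle that
   distance is at least [h > 0] for exactly [C(n, a + h)] of the [C(n, a)]
   arrangements (as [2a + h > n], which is where [c_i > 1/2] enters).  Hence [E(m_i) = 2a - n + sum_(h > 0) C(n, a + h) / C(n, a)],
   and as [C(n, m + 1) / C(n, m) <= (n - a) / (a + 1)] for [m >= a], the tail
   sum is at most [(n - a) / (2a + 1 - n) <= (1 - c_i) / (2 c_i - 1)]. *)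

(* The distance from the current position of the +-1 walk [f] (started at 0)
   down from its running maximum; see [walk_max]. *)
Definition gap_step (d : nat) (up : bool) := if up then d.-1 else d.+1.
Definition max_gap (f : seq bool) := foldl gap_step 0 f.

Lemma max_gap_rcons f x : max_gap (rcons f x) = gap_step (max_gap f) x.
Proof. by rewrite /max_gap foldl_rcons. Qed.

Lemma max_gap_le_size f : max_gap f <= size f.
Proof.
elim/last_ind: f => [|f x IH] //.
rewrite max_gap_rcons size_rcons /gap_step; case: x; lia.
Qed.

Fixpoint bool_seqs n : seq (seq bool) :=
  if n is n'.+1 then [seq rcons f x | f <- bool_seqs n', x <- [:: true; false]]
  else [:: [::]].

Lemma mem_bool_seqs n f : (f \in bool_seqs n) = (size f == n).
Proof.
elim: n f => [|n IH] f; first by case: f.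
apply/idP/idP.
  by case/allpairsP => [[g x]] /= [Hg _ ->]; rewrite size_rcons eqSS -IH.
case/lastP: f => [|g x] //; rewrite size_rcons eqSS -IH => Hg.
by apply/allpairsP; exists (g, x) => /=; split => //; case: x.
Qed.

Lemma uniq_bool_seqs n : uniq (bool_seqs n).
Proof.
elim: n => [|n IH] //.
change (uniq [seq rcons f x | f <- bool_seqs n, x <- [:: true; false]]).
apply: allpairs_uniq => // [[f x]] [g y] _ _ /= E.
have Exy : x = y by have := congr1 (last true) E; rewrite !last_rcons.
by move: E; rewrite Exy => /rcons_inj [->].
Qed.

Lemma count_bool_seqsS P n : count P (bool_seqs n.+1) =
  count (fun f => P (rcons f true)) (bool_seqs n) +
  count (fun f => P (rcons f false)) (bool_seqs n).
Proof.
by rewrite /=; elim: (bool_seqs n) => [|f L IH] //=; rewrite IH; lia.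
Qed.

Lemma count_bool_seqs_ups n a :
  count (fun f => count id f == a) (bool_seqs n) = 'C(n, a).
Proof.
elim: n a => [|n IH] a; first by case: a.
rewrite count_bool_seqsS.
under eq_count => f do rewrite -cats1 count_cat addn1.
under [X in _ + X]eq_count => f do rewrite -cats1 count_cat addn0.
case: a => [|a]; last by rewrite binS -!IH addnC.
rewrite !bin0 -(bin0 n) -(IH 0) -[RHS]add0n; congr (_ + _).
by apply/eqP; rewrite eqn0Ngt -has_count; apply/hasPn.
Qed.

Lemma count_bool_seqs_gap n a h : 0 < h -> n < a + a + h ->
  count (fun f => (count id f == a) && (h <= max_gap f)) (bool_seqs n) =
  'C(n, a + h).
Proof.
case: h => [|h] // _; elim: n a h => [|n IH] a h hn.
  by rewrite /= /max_gap /= andbF addnS.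
rewrite count_bool_seqsS.
under eq_count => f do
  rewrite max_gap_rcons -cats1 count_cat addn1 /= ltn_predRL.
under [X in _ + X]eq_count => f do
  rewrite max_gap_rcons -cats1 count_cat addn0 /= ltnS.
case: a hn => [|a] hn.
  case: h hn => [|h] hn; first lia.
  rewrite IH; last lia.
  rewrite !add0n (@bin_small n) ?(@bin_small n.+1) ?addn0; [|lia|lia].
  by apply/eqP; rewrite eqn0Ngt -has_count; apply/hasPn.
under eq_count => f do rewrite eqSS.
rewrite (IH a h.+1); last lia.
case: h hn => [|h] hn.
  under eq_count => f do rewrite leq0n andbT.
  by rewrite count_bool_seqs_ups addn1 addn2 binS.
by rewrite IH ?(addSn, addnS, binS) //; lia.
Qed.

Lemma sum_ord_ltn n d : \sum_(h < n) (h < d) = minn d n.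
Proof.
elim: n => [|n IH]; first by rewrite big_ord0 minn0.
by rewrite big_ord_recr /= IH; case: (ltnP n d) => H; lia.
Qed.

Lemma sum_max_gap n a : n <= a + a ->
  \sum_(f <- bool_seqs n | count id f == a) max_gap f =
  \sum_(h < n) 'C(n, a + h.+1).
Proof.
move=> hn; rewrite big_seq_cond.
transitivity (\sum_(f <- bool_seqs n | (f \in bool_seqs n) && (count id f == a))
                \sum_(h < n) (h < max_gap f)).
  apply: eq_bigr => f /andP [Hf _]; rewrite sum_ord_ltn.
  move: Hf; rewrite mem_bool_seqs => /eqP <-.
  by rewrite (minn_idPl (max_gap_le_size f)).
rewrite exchange_big /=; apply: eq_bigr => h _.
rewrite -big_seq_cond -count_bool_seqs_gap //; last lia.
rewrite -sum1_count big_mkcond [RHS]big_mkcond /=; apply: eq_bigr => f _.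
by case: (count id f == a); case: (h < max_gap f).
Qed.

Lemma bin_tail_mul_le n a :
  (\sum_(h < n) 'C(n, a + h.+1)) * (a.+1 - (n - a)) <= 'C(n, a) * (n - a).
Proof.
set b := n - a; set S := \sum_(h < n) _.
have bin_ratio j : 'C(n, a + j.+1) * a.+1 <= 'C(n, a + j) * b.
  apply: (@leq_trans ('C(n, a + j.+1) * (a + j).+1)).
    by rewrite leq_mul2l ltnS leq_addr orbT.
  by rewrite mulnC addnS mul_bin_left [X in _ <= X]mulnC leq_mul2r /b; lia.
have HS : S * a.+1 <= b * ('C(n, a) + S).
  apply: (@leq_trans (\sum_(h < n) 'C(n, a + h) * b)).
    by rewrite /S big_distrl leq_sum.
  rewrite -big_distrl [X in _ <= X]mulnC leq_mul2r; apply/orP; right.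
  apply: (@leq_trans (\sum_(h < n.+1) 'C(n, a + h))).
    by rewrite big_ord_recr leq_addr.
  by rewrite big_ord_recl addn0.
rewrite mulnBr mulnC; nia.
Qed.

Local Open Scope ring_scope.

Definition walk (f : seq bool) (t : nat) : int :=
  (count id (take t f))%:Z - (count negb (take t f))%:Z.

Lemma walk_rcons f x t : walk (rcons f x) t =
  if (t <= size f)%N then walk f t else walk f (size f) + (if x then 1 else -1).
Proof.
rewrite /walk -cats1; case: leqP => Ht; first by rewrite takel_cat.
rewrite take_cat ltnNge (ltnW Ht) /= take_size take_oversize ?subn_gt0 //.
by rewrite !count_cat; case: x => /=; lia.
Qed.

Lemma walk_max f :
  (forall t, walk f t <= walk f (size f) + (max_gap f)%:Z) /\
  exists2 t, (t <= size f)%N & walk f t = walk f (size f) + (max_gap f)%:Z.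
Proof.
elim/last_ind: f => [|f x [IH1 [t0 Ht0 IH2]]].
  by split => [t|]; [|exists 0%N => //]; rewrite /walk /max_gap /=; lia.
have Hend : walk (rcons f x) (size (rcons f x)) =
    walk f (size f) + (if x then 1 else -1).
  by rewrite walk_rcons size_rcons ltnn.
rewrite Hend max_gap_rcons size_rcons /gap_step.
split => [t|].
  rewrite walk_rcons; case: leqP => _; have := IH1 t; case: x {Hend} => /=; lia.
case: x {Hend} => /=.
  case E: (max_gap f) IH2 => [|d] IH2.
    by exists (size f).+1 => //; rewrite walk_rcons ltnn; lia.
  by exists t0; [apply: leqW | rewrite walk_rcons Ht0 IH2; lia].
by exists t0; [apply: leqW | rewrite walk_rcons Ht0 IH2; lia].
Qed.

Lemma mem_take_enum_ord n t (j : 'I_n) : (j \in take t (enum 'I_n)) = (j < t)%N.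
Proof.
rewrite -(mem_map val_inj) map_take val_enum_ord take_iota mem_iota /=.
by rewrite leq_min ltn_ord andbT.
Qed.

Lemma count_take_enum_ord n (P : pred 'I_n) t :
  count P (take t (enum 'I_n)) = #|[set j : 'I_n | (j < t)%N && P j]|.
Proof.
rewrite -size_filter.
have /card_uniqP <- : uniq (filter P (take t (enum 'I_n))).
  by rewrite filter_uniq ?take_uniq ?enum_uniq.
by apply: eq_card => j; rewrite mem_filter mem_take_enum_ord inE andbC.
Qed.

Lemma card_weight_ge n (s : {perm 'I_n}) (P : pred 'I_n) (t : nat) :
  #|[set v | P v && (- t%:Z <= weight s v)]| =
  count (fun j => P ((s^-1)%g j)) (take t (enum 'I_n)).
Proof.
rewrite count_take_enum_ord -(card_preimset _ (@perm_inj _ (s^-1)%g)).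
by apply: eq_card => j; rewrite !inE /weight permKV lerN2 lez_nat andbC.
Qed.

Lemma perm_eq_bool (f g : seq bool) :
  count id f = count id g -> size f = size g -> perm_eq f g.
Proof.
have countE (P : pred bool) h :
    count P h = (P true * count id h + P false * (size h - count id h))%N.
  rewrite -(count_predC id h) addKn.
  elim: h => [|x h /= ->]; first by rewrite !muln0.
  by case: x; case: (P true); case: (P false) => /=; lia.
by move=> Hc Hs; apply/seq.permP => P; rewrite (countE P f) (countE P g) Hc Hs.
Qed.

Lemma eq_map_enum (T : finType) (R : Type) (g h : T -> R) :
  map g (enum T) = map h (enum T) <-> g =1 h.
Proof.
split=> [/eq_in_map E x | E]; last exact: eq_map.
by apply: E; rewrite mem_enum.
Qed.

Section WeightOrder.
Variables (n k : nat) (part : 'I_n -> 'I_k) (i : 'I_k).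

Local Notation part_size := #|[set v | part v == i]|.

(* Listing the vertices by decreasing weight, [steps s] records which of them
   lie in [V_i], so that [X(t)] is the walk of [steps s] at time [t]. *)
Definition in_part (s : {perm 'I_n}) (j : 'I_n) := part ((s^-1)%g j) == i.
Definition steps (s : {perm 'I_n}) : seq bool := map (in_part s) (enum 'I_n).

Lemma size_steps s : size (steps s) = n.
Proof. by rewrite size_map size_enum_ord. Qed.

Lemma Xt_walk s t : Xt part i s t = walk (steps s) t.
Proof. by rewrite /Xt /walk -map_take !count_map !card_weight_ge. Qed.

Lemma count_steps s : count id (steps s) = part_size.
Proof.
rewrite count_map -[enum _](take_oversize (n := n)) ?size_enum_ord //.
rewrite -(card_weight_ge _ (fun v => part v == i)); apply: eq_card => v.
by rewrite !inE /weight lerN2 lez_nat ltn_ord andbT.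
Qed.

Lemma m_i_walk s :
  m_i part i s = part_size%:Z - (n - part_size)%:Z + (max_gap (steps s))%:Z.
Proof.
have [walk_le [t0 Ht0 walk_t0]] := walk_max (steps s).
have walk_end :
    walk (steps s) (size (steps s)) = part_size%:Z - (n - part_size)%:Z.
  have Hn : (part_size + count negb (steps s))%N = n.
    by rewrite -(count_steps s) count_predC size_steps.
  rewrite /walk take_size count_steps.
  by rewrite (_ : count negb _ = n - part_size)%N //; lia.
rewrite walk_end in walk_le walk_t0; rewrite size_steps in Ht0.
apply/le_anti/andP; split.
  apply: bigmax_le => [|t _]; last by rewrite Xt_walk walk_le.
  by have := walk_le 0%N; rewrite /walk take0.
rewrite -walk_t0 -Xt_walk.
exact: (le_bigmax _ (fun t : 'I_n.+1 => Xt part i s t)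
                   (Ordinal (Ht0 : t0 < n.+1)%N)).
Qed.

Definition fiber (f : seq bool) : nat := \sum_(s : {perm 'I_n}) (steps s == f).

Lemma in_part_mulV s (p : {perm 'I_n}) j :
  in_part (s * p^-1)%g j = in_part s (p j).
Proof. by rewrite /in_part invMg invgK permM. Qed.

Lemma fiber_reorder s (p : {perm 'I_n}) :
  fiber [seq in_part s (p j) | j <- enum 'I_n] = fiber (steps s).
Proof.
rewrite /fiber (reindex_inj (mulIg (p^-1)%g)) /=; apply: eq_bigr => s' _.
congr nat_of_bool; apply/eqP/eqP => /eq_map_enum E; apply/eq_map_enum => j.
  by have := E ((p^-1)%g j); rewrite in_part_mulV !permKV.
by rewrite in_part_mulV E.
Qed.

Lemma fiber_const f :
  size f = n -> count id f = part_size -> fiber f = fiber (steps 1).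
Proof.
move=> Hs Hc; have : perm_eq f [tuple in_part 1 j | j < n].
  by apply: perm_eq_bool; rewrite ?size_tuple // Hc -(count_steps 1).
case/tuple_permP => p ->; rewrite -(fiber_reorder 1 p); congr fiber.
by apply: eq_map => j; rewrite tnth_mktuple.
Qed.

Lemma fiber0 f : count id f != part_size -> fiber f = 0%N.
Proof.
move=> Hf; apply: big1 => s _; apply/eqP; rewrite eqb0.
by apply: contraNneq Hf => <-; rewrite count_steps.
Qed.

Lemma sum_perm_steps (G : seq bool -> nat) :
  (\sum_(s : {perm 'I_n}) G (steps s) =
   fiber (steps 1) * \sum_(f <- bool_seqs n | count id f == part_size) G f)%N.
Proof.
transitivity
  (\sum_(s : {perm 'I_n}) \sum_(f <- bool_seqs n) (steps s == f) * G f)%N.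
  apply: eq_bigr => s _.
  rewrite (bigD1_seq (steps s)) ?uniq_bool_seqs ?mem_bool_seqs ?size_steps //=.
  rewrite eqxx mul1n.
  by rewrite big1 ?addn0 // => f /negbTE; rewrite eq_sym => ->.
rewrite exchange_big big_distrr [RHS]big_mkcond /= !big_seq.
apply: eq_bigr => f; rewrite mem_bool_seqs => /eqP Hf.
rewrite -big_distrl /= -/(fiber f).
by case: eqP => Hc; [rewrite fiber_const | rewrite fiber0 //; apply/eqP].
Qed.
End WeightOrder.

Lemma E_m_eq (R : realFieldType) n k (part : 'I_n -> 'I_k) i a :
  #|[set v | part v == i]| = a -> (n <= a + a)%N ->
  E_m R part i =
  a%:R - (n - a)%:R + (\sum_(h < n) 'C(n, a + h.+1))%:R / 'C(n, a)%:R.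
Proof.
move=> ha hn; set S := (\sum_(h < n) _)%N.
set K := fiber part i (steps part i 1).
have fact_eq : n`! = (K * 'C(n, a))%N.
  have := sum_perm_steps part i (fun _ => 1%N).
  by rewrite sum_nat_const card_Sn muln1 sum1_count ha count_bool_seqs_ups.
have sum_gap : (\sum_s max_gap (steps part i s))%N = (K * S)%N.
  by rewrite sum_perm_steps ha sum_max_gap.
have C_gt0 : (0 < 'C(n, a))%N.
  by rewrite bin_gt0 -ha (leq_trans (max_card _)) ?card_ord.
have K_gt0 : (0 < K)%N.
  by move: (fact_gt0 n); rewrite fact_eq muln_gt0 => /andP [].
rewrite /E_m.
under eq_bigr => s _ do rewrite m_i_walk ha rmorphD rmorphB /=.
rewrite big_split /= sumr_const card_Sn -natr_sum sum_gap fact_eq !natrM.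
field; rewrite !pnatr_eq0 -!lt0n; apply/andP; split; lia.
Qed.

Theorem mainTheorem7 (R : realFieldType) (k : nat) (c : 'I_k -> R)
  (hk : (3 <= k)%N)
  (hdec : forall j j' : 'I_k, (j <= j')%N -> c j' <= c j)
  (hpos : forall j, 0 < c j)
  (hsum : \sum_(j < k) c j = 1)
  (n : nat) (part : 'I_n -> 'I_k)
  (hsize : forall j, (#|[set v | part v == j]|)%:R = c j * n%:R)
  (i : 'I_k) (hci : 1 / 2 < c i) :
  E_m R part i <= 2 * c i * n%:R - n%:R + 2 * (1 - c i) / (2 * c i - 1).
Proof.
set a := #|[set v | part v == i]|.
have c_le1 : c i <= 1.
  by rewrite -hsum (bigD1 i) //= lerDl sumr_ge0 // => j _; apply: ltW.
have ha : a%:R = c i * n%:R := hsize i.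
have a_le_n : (a <= n)%N by rewrite -[X in (_ <= X)%N]card_ord max_card.
have n_ge0 : (0 : R) <= n%:R by [].
have n_le_2a : (n <= a + a)%N by rewrite -(ler_nat R) natrD ha; nra.
have := bin_tail_mul_le n a.
rewrite -(ler_nat R) !natrM !natrB; [|lia|lia].
rewrite -[a.+1]addn1 natrD ha.
set S := (\sum_(h < n) _)%:R; set C := 'C(n, a)%:R => tail_le.
have C_gt0 : 0 < C by rewrite ltr0n bin_gt0.
have S_ge0 : 0 <= S by [].
have S_le : S * (2 * c i - 1) <= (1 - c i) * C by nra.
have ratio_le : S / C <= 2 * (1 - c i) / (2 * c i - 1).
  by rewrite ler_pdivrMr // mulrAC ler_pdivlMr; nra.
by rewrite (E_m_eq R (erefl a) n_le_2a) natrB // ha; lra.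
Qed.
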